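(* Let $\mathbb{F}\in\{\mathbb{R},\mathbb{C}\}$, $A\in\mathbb{F}^{m\times n}$ with $\|A\|_{\infty,col}\le1$, $x_0\in\mathbb{F}^n$ with $S=\mathrm{supp}\,x_0$ and $\#S=K$, $\epsilon\in\mathbb{F}^m$, $b=Ax_0+\epsilon$, and assume $\beta_K>0$. If $$|x_{0,j}|>\Big(1+\frac{1}{\beta_K}\Big)\|\epsilon\|_2\quad\text{for all }j\in S,$$ then the oracle solution $x'=x_S$ is a strict local minimizer of $\mathcal{K}_{K,reg}$ with $\mathrm{supp}(x')=\mathrm{supp}(x_0)$. Moreover $|x'_j|>\|\epsilon\|_2$ for $j\in S$, $\|Ax'-b\|_2\le\|\epsilon\|_2$ and $\|x'-x_0\|_2\le\|\epsilon\|_2/\beta_K$.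
   Context: $\|A\|_{\infty,col}=\max_i\|a_i\|_2$ over the columns $a_i$ of $A$. $\mathrm{card}(x)$ is the number of nonzero entries, $P_K=\{x:\mathrm{card}(x)\le K\}$, $\iota_{P_K}$ its indicator function; $\beta_k=\inf\{\|Ax\|_2/\|x\|_2:x\ne0,\ \mathrm{card}(x)\le k\}$. $\mathcal{Q}_2(\iota_{P_K})$ is the function such that $\mathcal{Q}_2(\iota_{P_K})(x)+\|x\|^2$ is the lower semicontinuous convex envelope of $\iota_{P_K}(x)+\|x\|^2$; explicitly, with $\tilde x$ the entries of $x$ sorted so that $|\tilde x_j|$ is non-increasing, $\mathcal{Q}_2(\iota_{P_K})(x)=\frac{1}{k_*}\big(\sum_{j>K-k_*}|\tilde x_j|\big)^2-\sum_{j>K-k_*}|\tilde x_j|^2$, where $k_*$ is the largest $k\in\{1,\dots,K\}$ with $\sum_{j>K-k}|\tilde x_j|-k|\tilde x_{K+1-k}|\ge0$. $\mathcal{K}_{K,reg}(x)=\mathcal{Q}_2(\iota_{P_K})(x)+\|Ax-b\|_2^2$. $A_S$ is $A$ with columns outside $S$ set to zero; the oracle solution is $x_S=(A_S^*A_S)^\dagger A_S^*b$ ($\dagger$ Moore–Penrose inverse, $A^*$ conjugate transpose). *)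

From HB Require Import structures.
From mathcomp Require Import all_boot all_order all_algebra.
From mathcomp Require Import all_classical all_reals.
From mathcomp.real_closed Require Import complex.

Set Implicit Arguments.
Unset Strict Implicit.
Unset Printing Implicit Defensive.

Import Order.TTheory GRing.Theory Num.Theory.
Local Open Scope ring_scope.
Local Open Scope classical_set_scope.

(* Generic setting: scalars F (= R or R[i]) with a real-valued modulus
   [ab : F -> R] and a conjugation [cj : F -> F].  The theorem instantiates
   (F, ab, cj) concretely as (R, Num.norm, id) and (R[i], normc, conjc). *)
Section Generic.
Variables (R : realType) (F : comNzRingType) (ab : F -> R) (cj : F -> F).

Definition norm2 (k : nat) (v : 'cV[F]_k) : R :=
  Num.sqrt (\sum_(i < k) ab (v i 0) ^+ 2).

Definition colnorm_inf (m n : nat) (A : 'M[F]_(m, n)) : R :=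
  \big[Num.max/0]_(i < n) norm2 (col i A).

Definition supp (n : nat) (x : 'cV[F]_n) : {set 'I_n} := [set i | x i 0 != 0].
Definition card_ (n : nat) (x : 'cV[F]_n) : nat := #|supp x|.

Definition beta (m n : nat) (A : 'M[F]_(m, n)) (k : nat) : R :=
  inf [set norm2 (A *m x) / norm2 x | x in [set x : 'cV[F]_n | x != 0 /\ (card_ x <= k)%N]].

(* moduli |x~_1| >= |x~_2| >= ... (0-indexed list) *)
Definition sorted_abs (n : nat) (x : 'cV[F]_n) : seq R :=
  sort (fun a b : R => b <= a) [seq ab (x i 0) | i <- enum 'I_n].

(* sum_{j > K-k} |x~_j| (1-indexed j), i.e. 0-indexed positions K-k .. n-1 *)
Definition tail_sum (n : nat) (x : 'cV[F]_n) (K k : nat) : R :=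
  \sum_(K - k <= j < n) (sorted_abs x)`_j.
Definition tail_sumsq (n : nat) (x : 'cV[F]_n) (K k : nat) : R :=
  \sum_(K - k <= j < n) ((sorted_abs x)`_j) ^+ 2.

(* k_* = largest k in {1..K} with sum_{j>K-k}|x~_j| - k |x~_{K+1-k}| >= 0 *)
Definition kstar (n : nat) (x : 'cV[F]_n) (K : nat) : nat :=
  \max_(k < K.+1 | (0 < k)%N && (0 <= tail_sum x K k - k%:R * (sorted_abs x)`_(K - k)))
     (k : nat).

Definition Q2 (n : nat) (K : nat) (x : 'cV[F]_n) : R :=
  (kstar x K)%:R^-1 * (tail_sum x K (kstar x K)) ^+ 2 - tail_sumsq x K (kstar x K).

Definition Kreg (m n : nat) (A : 'M[F]_(m, n)) (b : 'cV[F]_m) (K : nat)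
  (x : 'cV[F]_n) : R := Q2 K x + norm2 (A *m x - b) ^+ 2.

Definition restr_cols (m n : nat) (A : 'M[F]_(m, n)) (S : {set 'I_n}) : 'M[F]_(m, n) :=
  \matrix_(i, j) (if j \in S then A i j else 0).

Definition adjmx (m n : nat) (A : 'M[F]_(m, n)) : 'M[F]_(n, m) := map_mx cj A^T.

(* X is the Moore-Penrose inverse of M (Penrose conditions; it exists and is unique) *)
Definition is_MP_inverse (m n : nat) (M : 'M[F]_(m, n)) (X : 'M[F]_(n, m)) : Prop :=
  [/\ M *m X *m M = M, X *m M *m X = X,
      adjmx (M *m X) = M *m X & adjmx (X *m M) = X *m M].

Definition strict_local_min (n : nat) (f : 'cV[F]_n -> R) (x' : 'cV[F]_n) : Prop :=
  exists2 d : R, 0 < d & forall x, x != x' -> norm2 (x - x') < d -> f x' < f x.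

Definition prop56_stmt : Prop :=
  forall (m n : nat) (A : 'M[F]_(m, n)) (x0 : 'cV[F]_n) (eps : 'cV[F]_m) (K : nat),
  colnorm_inf A <= 1 ->
  #|supp x0| = K ->
  let S := supp x0 in
  let b := A *m x0 + eps in
  0 < beta A K ->
  (forall j, j \in S -> (1 + (beta A K)^-1) * norm2 eps < ab (x0 j 0)) ->
  forall X : 'M[F]_n,
  is_MP_inverse (adjmx (restr_cols A S) *m restr_cols A S) X ->
  let x' := X *m adjmx (restr_cols A S) *m b in
  [/\ strict_local_min (Kreg A b K) x',
      supp x' = S,
      (forall j, j \in S -> norm2 eps < ab (x' j 0)),
      norm2 (A *m x' - b) <= norm2 eps
    & norm2 (x' - x0) <= norm2 eps / beta A K].

End Generic.

(* The oracle solution solves the normal equations of least squares restricted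
   to S, so the residual r = A x' - b is orthogonal to the range of A_S and
   ||A (x' - x0)||^2 + ||r||^2 = ||eps||^2.  With beta_K this gives the error
   bounds, and the lower bound on |x0_j| keeps the entries of x' on S above
   ||eps||.
   Near x' the K largest entries of x are those indexed by S, and
   Q2(x) >= 2 a sig - 2 sig^2, where sig is the mass of x off S and
   a > ||eps|| + sig is one of the K largest moduli.  Since A^* r vanishes on S
   and has entries at most ||eps|| (unit columns), the data term loses at most
   2 ||eps|| sig, so K(x) > K(x') = ||r||^2 when sig > 0.  When sig = 0 the
   perturbation x - x' is K-sparse and beta_K > 0 makes ||A (x - x')|| > 0,
   while Q2 vanishes on vectors with exactly K nonzero entries. *)

From HB Require Import structures.
From mathcomp Require Import all_boot all_order all_algebra.
From mathcomp Require Import all_classical all_reals.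
From mathcomp.real_closed Require Import complex.
From mathcomp Require Import lra ring.
Import Order.TTheory GRing.Theory Num.Theory.
Local Open Scope ring_scope.
Set Implicit Arguments.
Unset Strict Implicit.
Unset Printing Implicit Defensive.

Lemma subcvE (V : zmodType) k (u v : 'cV[V]_k) j : (u - v) j 0 = u j 0 - v j 0.
Proof. by rewrite !mxE. Qed.

Lemma sorted_nth_gtE (R : realDomainType) (s : seq R) (t : R) j :
  sorted (fun a b : R => b <= a) s -> (j < size s)%N ->
  (t < s`_j) = (j < count (fun v => (t < v)%R) s)%N.
Proof.
elim: s j => [|v s IH] // j s_sorted /= lt_j_s.
have v_max : all (fun u => u <= v) s.
  by apply: order_path_min s_sorted => a b c ba cb; apply: le_trans cb ba.
have [t_lt_v|t_ge_v] := boolP (t < v).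
  by case: j lt_j_s => [|j] //= lt_j_s; rewrite IH ?(path_sorted s_sorted).
have le_t u : u \in s -> (t < u) = false.
  move=> su; apply/negbTE; apply: contra t_ge_v => /lt_le_trans; apply.
  exact: (allP v_max).
rewrite (eq_in_count le_t) count_pred0 /=.
by case: j lt_j_s => [|j] //= lt_j_s; rewrite ?(negbTE t_ge_v) ?le_t ?mem_nth.
Qed.

Lemma sum_sqr_le_sqr_sum (R : realDomainType) (I : Type) (r : seq I) (P : pred I)
    (f : I -> R) :
  (forall i, P i -> 0 <= f i) ->
  \sum_(i <- r | P i) f i ^+ 2 <= (\sum_(i <- r | P i) f i) ^+ 2.
Proof.
move=> f_ge0; elim: r => [|i r IH]; first by rewrite !big_nil expr0n.
rewrite !big_cons; case: ifP => // Pi.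
have := f_ge0 i Pi; have : 0 <= \sum_(j <- r | P j) f j by exact: sumr_ge0.
nra.
Qed.

Lemma CauchySchwarz_sum (R : rcfType) (I : finType) (u v : I -> R) :
  \sum_i u i * v i <= Num.sqrt (\sum_i u i ^+ 2) * Num.sqrt (\sum_i v i ^+ 2).
Proof.
rewrite -sqrtrM; last by apply: sumr_ge0 => i _; exact: sqr_ge0.
apply: le_trans (ler_norm _) _; rewrite -sqrtr_sqr ler_sqrt; last first.
  by apply: mulr_ge0; apply: sumr_ge0 => i _; exact: sqr_ge0.
have lagrange : \sum_i \sum_j (u i * v j - u j * v i) ^+ 2 =
    2 * ((\sum_i u i ^+ 2) * (\sum_j v j ^+ 2) - (\sum_i u i * v i) ^+ 2).
  rewrite expr2 !big_distrlr (_ : forall x y : R, 2 * (x - y) = x + x - 2 * y);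
    last by move=> *; ring.
  rewrite [X in _ = _ + X - _]exchange_big /= -big_split mulr_sumr -sumrB /=.
  apply: eq_bigr => i _; rewrite -big_split mulr_sumr -sumrB /=.
  by apply: eq_bigr => j _; ring.
have : 0 <= \sum_i \sum_j (u i * v j - u j * v i) ^+ 2.
  by apply: sumr_ge0 => i _; apply: sumr_ge0 => j _; exact: sqr_ge0.
rewrite lagrange; lra.
Qed.

Section SortedModuli.
Variables (R : realType) (F : comNzRingType) (ab : F -> R).
Hypotheses (ab_ge0 : forall z, 0 <= ab z) (ab_eq0 : forall z, (ab z == 0) = (z == 0)).
Variables (n : nat) (x : 'cV[F]_n).
Local Notation s := (sorted_abs ab x).

Lemma size_sorted_abs : size s = n.
Proof. by rewrite size_sort size_map size_enum_ord. Qed.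

Lemma sorted_abs_sorted : sorted (fun a b : R => b <= a) s.
Proof. by apply: sort_sorted => a b; rewrite le_total. Qed.

Lemma perm_sorted_abs : perm_eq s [seq ab (x i 0) | i <- enum 'I_n].
Proof. by apply/permPl; apply: perm_sort. Qed.

Lemma sorted_abs_ge0 j : 0 <= s`_j.
Proof.
have [lt_j_n|ge_j_n] := ltnP j n; last by rewrite nth_default ?size_sorted_abs.
have := @mem_nth _ 0 s j; rewrite size_sorted_abs => /(_ lt_j_n).
by rewrite (perm_mem perm_sorted_abs) => /mapP[i _ ->].
Qed.

Lemma sorted_abs_le i j : (i <= j)%N -> s`_j <= s`_i.
Proof.
move=> le_ij; have [lt_j_n|ge_j_n] := ltnP j n; last first.
  by rewrite nth_default ?size_sorted_abs ?sorted_abs_ge0.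
have ge_trans : transitive (fun a b : R => b <= a).
  by move=> a b c ba cb; apply: le_trans cb ba.
apply: (sorted_leq_nth ge_trans (@lexx _ R) 0 sorted_abs_sorted);
  by rewrite ?inE ?size_sorted_abs ?(leq_ltn_trans le_ij lt_j_n).
Qed.

Lemma kstar_spec K : (0 < K)%N ->
  let k := kstar ab x K in
  [/\ (0 < k)%N, (k <= K)%N & k%:R * s`_(K - k) <= tail_sum ab x K k].
Proof.
move=> K_gt0 /=.
pose P (k : 'I_K.+1) :=
  (0 < k)%N && (0 <= tail_sum ab x K k - (k : nat)%:R * s`_(K - k)).
have P_gt0 : (0 < #|P|)%N.
  apply/card_gt0P; exists (Ordinal (K_gt0 : (1 < K.+1)%N)).
  rewrite unfold_in /P /= subr_ge0 mul1r /tail_sum.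
  have [lt_K1_n|ge_K1_n] := ltnP (K - 1) n.
    by rewrite big_ltn // lerDl; apply: sumr_ge0 => j _; exact: sorted_abs_ge0.
  rewrite nth_default ?size_sorted_abs //.
  by apply: sumr_ge0 => j _; exact: sorted_abs_ge0.
have [k0 Pk0 max_k0] := eq_bigmax_cond (fun k : 'I_K.+1 => (k : nat)) P_gt0.
have -> : kstar ab x K = k0 by exact: max_k0.
move: Pk0; rewrite unfold_in => /andP[] k0_gt0; rewrite subr_ge0 => cond.
by split; rewrite // -ltnS.
Qed.

(* With a := s_(K-k), the witnesses are D = \sum_(K-k <= j < K) (a - s_j) and
   E = \sum_(K-k <= j < K) (a - s_j)^2. *)
Lemma Q2_tail_decomposition K : (0 < K)%N -> (K <= n)%N ->
  let k := kstar ab x K in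
  let sig := \sum_(K <= j < n) s`_j in
  exists2 D, 0 <= D <= sig &
  exists2 E, 0 <= E <= D ^+ 2 &
    Q2 ab K x = 2 * s`_(K - k) * sig + (sig - D) ^+ 2 / k%:R - E
                - \sum_(K <= j < n) s`_j ^+ 2.
Proof.
move=> K_gt0 le_K_n k sig; have [k_gt0 le_k_K cond] := kstar_spec K_gt0.
set m := (K - k)%N in cond *; set a := s`_m.
have le_m_K : (m <= K)%N by exact: leq_subr.
have K_m : (K - m)%N = k by rewrite subKn.
have split_tail (f : nat -> R) :
    \sum_(m <= j < n) f j = \sum_(m <= j < K) f j + \sum_(K <= j < n) f j.
  by rewrite (@big_cat_nat _ _ _ K).
have a_ge j : (m <= j)%N -> 0 <= a - s`_j.
  by move=> le_m_j; rewrite subr_ge0 sorted_abs_le.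
pose d1 := \sum_(m <= j < K) (a - s`_j); pose d2 := \sum_(m <= j < K) (a - s`_j) ^+ 2.
have head_sum : \sum_(m <= j < K) s`_j = k%:R * a - d1.
  by rewrite /d1 sumrB sumr_const_nat K_m -mulr_natl; ring.
have head_sumsq : \sum_(m <= j < K) s`_j ^+ 2 = k%:R * a ^+ 2 - 2 * a * d1 + d2.
  rewrite (eq_bigr (fun j => a ^+ 2 - 2 * a * (a - s`_j) + (a - s`_j) ^+ 2));
    last by move=> j _; ring.
  by rewrite big_split /= sumrB sumr_const_nat K_m -mulr_sumr -[_ *+ k]mulr_natl.
have d1_ge0 : 0 <= d1.
  by rewrite /d1 big_nat_cond; apply: sumr_ge0 => j /andP[/andP[/a_ge]].
exists d1.
  rewrite d1_ge0 /=; move: cond; rewrite /tail_sum -/m split_tail head_sum -/sig -/k -/a.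
  lra.
exists d2.
  apply/andP; split; first by apply: sumr_ge0 => j _; exact: sqr_ge0.
  rewrite /d2 /d1 big_nat_cond [X in _ <= X ^+ 2]big_nat_cond.
  by apply: sum_sqr_le_sqr_sum => j /andP[/andP[/a_ge]].
rewrite /Q2 -/k /tail_sum /tail_sumsq -/m !split_tail head_sum head_sumsq -/sig.
by field; rewrite pnatr_eq0 -lt0n.
Qed.

Section Threshold.
Variables (t : R) (S : {set 'I_n}).
Hypothesis S_gt : forall j, (j \in S) = (t < ab (x j 0)).

Lemma sorted_abs_gtE j : (j < n)%N -> (t < s`_j) = (j < #|S|)%N.
Proof.
move=> lt_j_n; rewrite sorted_nth_gtE ?sorted_abs_sorted ?size_sorted_abs //.
rewrite (permP perm_sorted_abs) count_map -sum1_count big_enum_cond -sum1_card.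
by congr (j < _)%N; apply: eq_bigl => i; rewrite S_gt.
Qed.

Lemma sum_sorted_abs_tail (f : R -> R) :
  \sum_(#|S| <= j < n) f s`_j = \sum_(j | j \notin S) f (ab (x j 0)).
Proof.
rewrite (@big_nat_widenl _ _ _ _ 0) // big_nat_cond.
rewrite (eq_bigl (fun j => (0 <= j < n)%N && ~~ (t < s`_j))); last first.
  move=> j /=; have [lt_j_n|//] := ltnP j n.
  by rewrite sorted_abs_gtE // -leqNgt.
rewrite -big_nat_cond.
have := big_nth 0 (r := s) (fun v => ~~ (t < v)) f; rewrite size_sorted_abs => <-.
rewrite (perm_big _ perm_sorted_abs) big_map big_enum_cond /=.
by apply: eq_bigl => j; rewrite S_gt.
Qed.

Lemma Q2_ge_threshold : (0 < #|S|)%N ->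
  let sig := \sum_(j | j \notin S) ab (x j 0) in
  exists2 a, t < a & 2 * a * sig - 2 * sig ^+ 2 <= Q2 ab #|S| x.
Proof.
move=> S_gt0 sig; have le_S_n : (#|S| <= n)%N.
  by have := max_card (mem S); rewrite card_ord.
set k := kstar ab x #|S|; have [k_gt0 _ _] := kstar_spec S_gt0.
have := Q2_tail_decomposition S_gt0 le_S_n.
rewrite (sum_sorted_abs_tail id) (sum_sorted_abs_tail (fun v => v ^+ 2)) -/k -/sig.
move=> [D /andP[D_ge0 le_D_sig] [E /andP[E_ge0 le_E_D] ->]].
have lt_m_S : (#|S| - k < #|S|)%N by rewrite ltn_subrL k_gt0.
exists s`_(#|S| - k); first by rewrite sorted_abs_gtE // (leq_trans lt_m_S le_S_n).
have : \sum_(j | j \notin S) ab (x j 0) ^+ 2 <= sig ^+ 2 by exact: sum_sqr_le_sqr_sum.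
have : 0 <= (sig - D) ^+ 2 / k%:R by rewrite divr_ge0 ?sqr_ge0.
have : D ^+ 2 <= sig ^+ 2 by rewrite ler_sqr ?nnegrE ?(le_trans D_ge0).
lra.
Qed.

End Threshold.

Lemma Q2_supp_eq0 : (0 < #|supp x|)%N -> Q2 ab #|supp x| x = 0.
Proof.
move=> supp_gt0; have le_S_n : (#|supp x| <= n)%N.
  by have := max_card (mem (supp x)); rewrite card_ord.
have supp_gt j : (j \in supp x) = (0 < ab (x j 0)).
  by rewrite inE lt0r ab_eq0 ab_ge0 andbT.
have off_supp0 (f : R -> R) : f 0 = 0 -> \sum_(j | j \notin supp x) f (ab (x j 0)) = 0.
  move=> f0; apply: big1 => j; rewrite inE negbK => /eqP ->.
  by have /eqP -> : ab 0 == 0 by rewrite ab_eq0.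
have := Q2_tail_decomposition supp_gt0 le_S_n.
rewrite (sum_sorted_abs_tail supp_gt id) (sum_sorted_abs_tail supp_gt (fun v => v ^+ 2)).
rewrite (off_supp0 id) // (off_supp0 (fun v => v ^+ 2)) ?expr0n //.
move=> [D /andP[D_ge0 D_le0] [E /andP[E_ge0 le_E_D] ->]].
have D0 : D = 0 by apply/le_anti; rewrite D_ge0 D_le0.
have E0 : E = 0 by apply/le_anti; rewrite E_ge0 andbT (le_trans le_E_D) // D0 expr0n.
by rewrite D0 E0 subrr expr0n mul0r !mulr0 !subr0 addr0.
Qed.

End SortedModuli.

Section ScalarProducts.
Variables (R : realType) (F : comNzRingType) (ab : F -> R).
Variables (cj : {rmorphism F -> F}) (re : F -> R).
(* Modulus, conjugation and real part: satisfied by (R, |.|, id, id) and by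
   (C, normc, conjc, Re). *)
Hypotheses (ab_ge0 : forall z, 0 <= ab z) (ab_eq0 : forall z, (ab z == 0) = (z == 0)).
Hypotheses (abM : {morph ab : z w / z * w}) (cjK : involutive cj).
Hypothesis reD : {morph re : z w / z + w}.
Hypothesis ab_sqrD :
  forall z w, ab (z + w) ^+ 2 = ab z ^+ 2 + ab w ^+ 2 + 2 * re (cj z * w).
Hypothesis re_conjM : forall z, re (cj z * z) = ab z ^+ 2.
Hypothesis re_conjM_le : forall z w, `|re (cj z * w)| <= ab z * ab w.

Local Notation adj := (adjmx cj).
Local Notation norm2 := (norm2 ab).

Lemma ab0 : ab 0 = 0.
Proof. by apply/eqP; rewrite ab_eq0. Qed.

Lemma re0 : re 0 = 0.
Proof. by apply: (addrI (re 0)); rewrite -reD !addr0. Qed.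

Lemma re_sum (I : Type) (r : seq I) (P : pred I) (f : I -> F) :
  re (\sum_(i <- r | P i) f i) = \sum_(i <- r | P i) re (f i).
Proof. exact: (big_morph re reD re0). Qed.

Lemma ab_sqr_inj z w : ab z ^+ 2 = ab w ^+ 2 -> ab z = ab w.
Proof. by move/eqP; rewrite eqrXn2 // => /eqP. Qed.

Lemma abN z : ab (- z) = ab z.
Proof. by apply: ab_sqr_inj; rewrite -!re_conjM rmorphN mulrNN. Qed.

Lemma ab_conj z : ab (cj z) = ab z.
Proof. by apply: ab_sqr_inj; rewrite -!re_conjM cjK mulrC. Qed.

Lemma ler_abD z w : ab (z + w) <= ab z + ab w.
Proof.
rewrite -ler_sqr ?nnegrE ?addr_ge0 // ab_sqrD sqrrD.
by have := re_conjM_le z w; rewrite ler_norml => /andP[_]; lra.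
Qed.

Lemma ler_ab_sum (I : Type) (r : seq I) (P : pred I) (f : I -> F) :
  ab (\sum_(i <- r | P i) f i) <= \sum_(i <- r | P i) ab (f i).
Proof.
elim/big_rec2: _ => [|i y1 y2 _ IH]; first by rewrite ab0.
by apply: le_trans (ler_abD _ _) _; rewrite lerD2l.
Qed.

Lemma adjmxM m n p (A : 'M[F]_(m, n)) (B : 'M[F]_(n, p)) : adj (A *m B) = adj B *m adj A.
Proof. by rewrite /adjmx trmx_mul map_mxM. Qed.

Lemma adjmxK m n (A : 'M[F]_(m, n)) : adj (adj A) = A.
Proof. by apply/matrixP => i j; rewrite !mxE cjK. Qed.

Definition inner k (v w : 'cV[F]_k) : F := (adj v *m w) 0 0.

Lemma innerE k (v w : 'cV[F]_k) : inner v w = \sum_i cj (v i 0) * w i 0.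
Proof. by rewrite /inner mxE; apply: eq_bigr => i _; rewrite !mxE. Qed.

Lemma inner_mulmxl k l (M : 'M[F]_(k, l)) v w : inner (M *m v) w = inner v (adj M *m w).
Proof. by rewrite /inner adjmxM mulmxA. Qed.

Lemma inner0r k (v : 'cV[F]_k) : inner v 0 = 0.
Proof. by rewrite /inner mulmx0 mxE. Qed.

Lemma norm2_ge0 k (v : 'cV[F]_k) : 0 <= norm2 v.
Proof. exact: sqrtr_ge0. Qed.

Lemma norm20 k : norm2 (0 : 'cV[F]_k) = 0.
Proof. by rewrite /norm2 big1 ?sqrtr0 // => i _; rewrite mxE ab0 expr0n. Qed.

Lemma norm2_sqr k (v : 'cV[F]_k) : norm2 v ^+ 2 = \sum_i ab (v i 0) ^+ 2.
Proof. by rewrite sqr_sqrtr // sumr_ge0 // => i _; exact: sqr_ge0. Qed.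

Lemma norm2N k (v : 'cV[F]_k) : norm2 (- v) = norm2 v.
Proof. by rewrite /norm2; congr Num.sqrt; apply: eq_bigr => i _; rewrite mxE abN. Qed.

Lemma norm2D_sqr k (v w : 'cV[F]_k) :
  norm2 (v + w) ^+ 2 = norm2 v ^+ 2 + norm2 w ^+ 2 + 2 * re (inner v w).
Proof.
rewrite !norm2_sqr innerE re_sum mulr_sumr -!big_split /=.
by apply: eq_bigr => i _; rewrite mxE ab_sqrD.
Qed.

Lemma ab_le_norm2 k (v : 'cV[F]_k) i : ab (v i 0) <= norm2 v.
Proof.
rewrite -ler_sqr ?nnegrE ?norm2_ge0 // norm2_sqr (bigD1 i) //= lerDl.
by apply: sumr_ge0 => j _; exact: sqr_ge0.
Qed.

Lemma norm2_gt0 k (v : 'cV[F]_k) : v != 0 -> 0 < norm2 v.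
Proof.
apply: contraNT; rewrite -leNgt => v_le0; apply/eqP/matrixP => i j.
rewrite ord1 mxE; apply/eqP; rewrite -ab_eq0 eq_le ab_ge0 andbT.
exact: le_trans (ab_le_norm2 v i) v_le0.
Qed.

Lemma ab_inner_le k (v w : 'cV[F]_k) : ab (inner v w) <= norm2 v * norm2 w.
Proof.
rewrite innerE; apply: le_trans (ler_ab_sum _ _ _) _.
under eq_bigr do rewrite abM ab_conj.
exact: CauchySchwarz_sum.
Qed.

Lemma ab_adjmx_mul_le m n (A : 'M[F]_(m, n)) (r : 'cV[F]_m) j :
  colnorm_inf ab A <= 1 -> ab ((adj A *m r) j 0) <= norm2 r.
Proof.
move=> A_le1; have -> : (adj A *m r) j 0 = inner (col j A) r.
  by rewrite innerE mxE; apply: eq_bigr => i _; rewrite !mxE.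
apply: le_trans (ab_inner_le _ _) _; rewrite ler_piMl ?norm2_ge0 //.
exact: le_trans (le_bigmax _ (fun i => norm2 (col i A)) j) A_le1.
Qed.

Lemma gram_eq0 m n (D : 'M[F]_(m, n)) : adj D *m D = 0 -> D = 0.
Proof.
move=> DD0; apply/matrixP => i j; rewrite mxE.
have /eqP : re ((adj D *m D) j j) = 0 by rewrite DD0 mxE re0.
rewrite mxE re_sum (eq_bigr (fun k => ab (D k j) ^+ 2)); last first.
  by move=> k _; rewrite !mxE re_conjM.
rewrite psumr_eq0 => [/allP/(_ i (mem_index_enum i))|k _]; last exact: sqr_ge0.
by rewrite sqrf_eq0 ab_eq0 => /eqP.
Qed.

Lemma gram_pinv_normal m n (G : 'M[F]_(m, n)) (X : 'M[F]_n) :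
  let M := adj G *m G in M *m X *m M = M -> M *m X *m adj G = adj G.
Proof.
move=> M MXM; have defM : adj G *m G = M by []; clearbody M.
have adjM : adj M = M by rewrite -defM adjmxM adjmxK.
have MXM' : M *m adj X *m M = M.
  by have := congr1 (@adjmx F cj n n) MXM; rewrite adjmxM (adjmxM M X) adjM mulmxA.
have : G *m (adj X *m M - 1%:M) = 0.
  apply: gram_eq0; rewrite adjmxM -mulmxA (mulmxA (adj G)) defM.
  by rewrite mulmxBr mulmx1 mulmxA MXM' subrr mulmx0.
rewrite mulmxBr mulmx1 => /eqP; rewrite subr_eq0 => /eqP/(congr1 (@adjmx F cj m n)).
by rewrite !adjmxM adjM adjmxK.
Qed.

Lemma pinv_factor n (M X : 'M[F]_n) :
  adj M = M -> X *m M *m X = X -> adj (X *m M) = X *m M -> X = M *m adj X *m X.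
Proof. by move=> adjM XMX adjXM; rewrite -{1}XMX -adjXM adjmxM adjM. Qed.

Lemma beta_mul_le m n (A : 'M[F]_(m, n)) K (h : 'cV[F]_n) :
  (card_ h <= K)%N -> beta ab A K * norm2 h <= norm2 (A *m h).
Proof.
move=> h_sparse; have [->|h_neq0] := eqVneq h 0.
  by rewrite mulmx0 !norm20 mulr0.
rewrite -ler_pdivlMr ?norm2_gt0 //; apply: ge_inf; last by exists h.
by exists 0 => _ [v _ <-]; rewrite divr_ge0 ?norm2_ge0.
Qed.

Lemma beta0 m n (A : 'M[F]_(m, n)) : beta ab A 0 = 0.
Proof.
rewrite /beta (_ : [set x | _]%classic = set0%classic) ?image_set0 ?inf0 //.
apply/seteqP; split => // v /= [v_neq0]; rewrite leqn0 cards_eq0 => /eqP supp0.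
apply: (negP v_neq0); apply/eqP/matrixP => i j; rewrite ord1 mxE; apply/eqP.
have : i \notin supp v by rewrite supp0 inE.
by rewrite inE negbK.
Qed.

Section ColumnRestriction.
Variables (m n : nat) (A : 'M[F]_(m, n)) (S : {set 'I_n}).
Local Notation G := (restr_cols A S).

Lemma restr_cols_mulmx (v : 'cV[F]_n) :
  (forall j, j \notin S -> v j 0 = 0) -> G *m v = A *m v.
Proof.
move=> v_out; apply/matrixP => i k; rewrite ord1 !mxE; apply: eq_bigr => j _.
by rewrite mxE; case: ifPn => [//|/v_out ->]; rewrite !mulr0.
Qed.

Lemma adj_restr_cols_mulmx_in p (B : 'M[F]_(m, p)) j k :
  j \in S -> (adj G *m B) j k = (adj A *m B) j k.
Proof. by move=> jS; rewrite !mxE; apply: eq_bigr => i _; rewrite !mxE jS. Qed.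

Lemma adj_restr_cols_mulmx_out p (B : 'M[F]_(m, p)) j k :
  j \notin S -> (adj G *m B) j k = 0.
Proof.
by move=> jS; rewrite mxE big1 // => i _; rewrite !mxE (negbTE jS) rmorph0 mul0r.
Qed.

Variables (b : 'cV[F]_m) (X : 'M[F]_n).
Hypothesis X_MP : is_MP_inverse cj (adj G *m G) X.
Local Notation x' := (X *m adj G *m b).

Lemma oracle_offsupp j : j \notin S -> x' j 0 = 0.
Proof.
case: X_MP => _ XMX _ adjXM jS.
rewrite (pinv_factor _ XMX adjXM) ?adjmxM ?adjmxK // -!mulmxA.
exact: adj_restr_cols_mulmx_out.
Qed.

Lemma oracle_normal_eq : adj G *m (A *m x' - b) = 0.
Proof.
case: X_MP => MXM _ _ _.
rewrite -(restr_cols_mulmx oracle_offsupp) mulmxBr !mulmxA.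
by rewrite (gram_pinv_normal MXM) subrr.
Qed.

Lemma oracle_pythagoras (x0 : 'cV[F]_n) : (forall j, j \notin S -> x0 j 0 = 0) ->
  norm2 (b - A *m x0) ^+ 2 = norm2 (A *m (x' - x0)) ^+ 2 + norm2 (A *m x' - b) ^+ 2.
Proof.
move=> x0_out; have h_out j : j \notin S -> (x' - x0) j 0 = 0.
  by move=> jS; rewrite subcvE oracle_offsupp ?x0_out ?subrr.
have -> : b - A *m x0 = A *m (x' - x0) + - (A *m x' - b).
  by rewrite mulmxBr opprB [RHS]addrC addrA subrK.
rewrite norm2D_sqr norm2N -(restr_cols_mulmx h_out) inner_mulmxl mulmxN.
by rewrite oracle_normal_eq oppr0 inner0r re0 mulr0 addr0.
Qed.

End ColumnRestriction.

Section LocalMinimality.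
Variables (m n : nat) (A : 'M[F]_(m, n)) (b : 'cV[F]_m) (x' : 'cV[F]_n) (e : R).
Local Notation S := (supp x').
Local Notation w := (adj A *m (A *m x' - b)).
Hypotheses (w_in : forall j, j \in S -> w j 0 = 0) (w_le : forall j, ab (w j 0) <= e).

Lemma Kreg_ge_offsupp K (x : 'cV[F]_n) :
  Q2 ab K x + norm2 (A *m (x - x')) ^+ 2 + norm2 (A *m x' - b) ^+ 2
    - 2 * e * \sum_(j | j \notin S) ab (x j 0) <= Kreg ab A b K x.
Proof.
rewrite /Kreg (_ : A *m x - b = A *m (x - x') + (A *m x' - b)); last first.
  by rewrite mulmxBr addrA subrK.
rewrite (norm2D_sqr (A *m (x - x'))) inner_mulmxl.
suff : - (e * \sum_(j | j \notin S) ab (x j 0)) <= re (inner (x - x') w) by lra.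
rewrite innerE re_sum mulr_sumr -sumrN big_mkcond; apply: ler_sum => j _.
case: ifPn => [jS|/negPn/w_in->]; last by rewrite mulr0 re0.
have -> : (x - x') j 0 = x j 0.
  by move: jS; rewrite subcvE inE negbK => /eqP->; rewrite subr0.
have := re_conjM_le (x j 0) (w j 0); rewrite ler_norml => /andP[+ _].
by apply: le_trans; rewrite lerN2 mulrC ler_wpM2r.
Qed.

Hypotheses (S_gt0 : (0 < #|S|)%N) (beta_gt0 : 0 < beta ab A #|S|).

Lemma Kreg_gt_offsupp_small (t : R) (x : 'cV[F]_n) :
  (forall j, (j \in S) = (t < ab (x j 0))) ->
  e + \sum_(j | j \notin S) ab (x j 0) <= t ->
  x != x' -> Kreg ab A b #|S| x' < Kreg ab A b #|S| x.
Proof.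
set sig := \sum_(j | j \notin S) ab (x j 0) => S_gt sig_small x_neq.
have [a t_lt_a] := Q2_ge_threshold ab_ge0 S_gt S_gt0; rewrite -/sig => Q2x_ge.
have Kx'E : Kreg ab A b #|S| x' = norm2 (A *m x' - b) ^+ 2.
  by rewrite /Kreg Q2_supp_eq0 ?add0r.
have := Kreg_ge_offsupp #|S| x; rewrite -/sig Kx'E.
suff : 0 < 2 * (sig * (a - sig - e)) + norm2 (A *m (x - x')) ^+ 2 by lra.
have [sig_gt0|] := ltP 0 sig.
  by rewrite ltr_wpDr ?sqr_ge0 // mulr_gt0 // mulr_gt0 // subr_gt0; lra.
rewrite le_eqVlt ltNge sumr_ge0 ?orbF // => /eqP sig0.
rewrite sig0 mul0r mulr0 add0r exprn_gt0 //.
have h_out j : j \notin S -> (x - x') j 0 = 0.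
  move=> jS; rewrite subcvE; move: (jS); rewrite inE negbK => /eqP->.
  move/eqP: sig0; rewrite /sig psumr_eq0 // => /allP/(_ j (mem_index_enum j)).
  by rewrite jS ab_eq0 => /eqP->; rewrite subr0.
have h_sparse : (card_ (x - x') <= #|S|)%N.
  apply/subset_leq_card/fintype.subsetP => j; rewrite !inE; apply: contraNN => jS.
  by apply/eqP/h_out; rewrite inE negbK.
apply: lt_le_trans (beta_mul_le A h_sparse).
by rewrite mulr_gt0 // norm2_gt0 // subr_eq0.
Qed.

Lemma Kreg_strict_local_min :
  (forall j, j \in S -> e < ab (x' j 0)) -> strict_local_min ab (Kreg ab A b #|S|) x'.
Proof.
move=> x'_large; have [j0 j0S] := card_gt0P S_gt0.
have e_ge0 : 0 <= e by exact: le_trans (ab_ge0 _) (w_le j0).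
pose gap := \big[Num.min/1]_(j in S) (ab (x' j 0) - e).
have gap_gt0 : 0 < gap by apply: lt_bigmin => // j jS; rewrite subr_gt0 x'_large.
have gap_le j : j \in S -> gap <= ab (x' j 0) - e by move=> jS; exact: bigmin_le_cond.
(* [d] is chosen so that the [n] off-support entries together stay below [gap / 2] *)
pose d := gap / (2 * n.+1%:R).
have d_gt0 : 0 < d by rewrite divr_gt0 // mulr_gt0 // ltr0n.
have nd_eq : n.+1%:R * d = gap / 2.
  by rewrite /d; field; rewrite addrC natr1 pnatr_eq0.
have d_le : d <= gap / 2 by rewrite -nd_eq -[leLHS]mul1r ler_pM2r // ler1n.
exists d => // x x_neq dist.
have near j : ab (x j 0 - x' j 0) < d.
  by rewrite -subcvE; apply: le_lt_trans (ab_le_norm2 _ j) dist.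
have off_small j : j \notin S -> ab (x j 0) < d.
  by move=> jS; move: (near j); rewrite inE negbK in jS; rewrite (eqP jS) subr0.
apply: (Kreg_gt_offsupp_small (t := e + gap / 2)) => //.
- move=> j; have [jS|jS] := boolP (j \in S); apply/esym; last first.
    apply/negbTE; rewrite -leNgt; apply: ltW.
    by apply: lt_le_trans (off_small j jS) _; lra.
  have := ler_abD (x j 0) (x' j 0 - x j 0); rewrite addrC subrK -opprB abN.
  by have := near j; have := gap_le j jS; lra.
- rewrite lerD2l; apply: le_trans (_ : \sum_(j < n) d <= _).
    rewrite big_mkcond; apply: ler_sum => j _.
    by case: ifPn => [/off_small/ltW //|_]; exact: ltW.
  by rewrite sumr_const card_ord -nd_eq -[d *+ n]mulr_natl ler_pM2r // ler_nat.
Qed.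

End LocalMinimality.

Theorem prop56_holds : prop56_stmt ab cj.
Proof.
move=> m n A x0 eps K colA cardK S b beta_gt0 x0_large X X_MP x'.
set e := norm2 eps in x0_large *; set be := beta ab A K in beta_gt0 x0_large *.
have K_gt0 : (0 < K)%N.
  by rewrite lt0n; apply: contraTneq beta_gt0 => K0; rewrite /be K0 beta0 ltxx.
have x0_out j : j \notin S -> x0 j 0 = 0 by rewrite inE negbK => /eqP.
have x'_out : forall j, j \notin S -> x' j 0 = 0 := oracle_offsupp b X_MP.
have h_sparse : (card_ (x' - x0) <= K)%N.
  rewrite -cardK; apply/subset_leq_card/fintype.subsetP => j; rewrite !inE.
  by apply: contraNN => /eqP x0j; rewrite subcvE x0j x'_out ?subrr // inE x0j eqxx.
have pyth := oracle_pythagoras b X_MP x0_out.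
rewrite /b addrC addKr -/b -/e in pyth.
have r_le : norm2 (A *m x' - b) <= e.
  by rewrite -ler_sqr ?nnegrE ?norm2_ge0 // pyth lerDr sqr_ge0.
have h_le : norm2 (x' - x0) <= e / be.
  rewrite ler_pdivlMr // mulrC; apply: le_trans (beta_mul_le A h_sparse) _.
  by rewrite -ler_sqr ?nnegrE ?norm2_ge0 // pyth lerDl sqr_ge0.
have x'_large j : j \in S -> e < ab (x' j 0).
  move=> jS; have := x0_large j jS; rewrite mulrDl mul1r mulrC.
  have := ler_abD (x' j 0) (x0 j 0 - x' j 0); rewrite addrC subrK -opprB abN -subcvE.
  by have := ab_le_norm2 (x' - x0) j; lra.
have supp_x' : supp x' = S.
  apply/setP => j; rewrite [in LHS]inE.
  have [jS|/x'_out->] := boolP (j \in S); last by rewrite eqxx.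
  by rewrite -ab_eq0 gt_eqF // (le_lt_trans (norm2_ge0 _) (x'_large j jS)).
split => //; have -> : K = #|supp x'| by rewrite supp_x'.
apply: (Kreg_strict_local_min (e := e)); rewrite ?supp_x' ?cardK //.
- move=> j jS; rewrite -(adj_restr_cols_mulmx_in A _ 0 jS).
  by rewrite (oracle_normal_eq b X_MP) mxE.
- by move=> j; apply: le_trans (ab_adjmx_mul_le _ _ colA) r_le.
Qed.

End ScalarProducts.

Section ComplexModulus.
Variable R : realType.
Local Notation normc := (@Normc.normc R).

Lemma normc_ge0 (z : R[i]) : 0 <= normc z.
Proof. by case: z => a b; exact: sqrtr_ge0. Qed.

Lemma normc_eq0 (z : R[i]) : (normc z == 0) = (z == 0).
Proof. by apply/eqP/eqP => [/Normc.eq0_normc|->] //; exact: Normc.normc0. Qed.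

Lemma normc_sqr (z : R[i]) : normc z ^+ 2 = complex.Re z ^+ 2 + complex.Im z ^+ 2.
Proof. by case: z => a b /=; rewrite sqr_sqrtr // addr_ge0 ?sqr_ge0. Qed.

Lemma normc_sqrD (z w : R[i]) :
  normc (z + w) ^+ 2 = normc z ^+ 2 + normc w ^+ 2 + 2 * complex.Re (z^* * w)%C.
Proof. by rewrite !normc_sqr; case: z => a b; case: w => c d /=; ring. Qed.

Lemma Re_conjcM (z : R[i]) : complex.Re (z^* * z)%C = normc z ^+ 2.
Proof. by rewrite normc_sqr; case: z => a b /=; ring. Qed.

Lemma Re_conjcM_le (z w : R[i]) : `|complex.Re (z^* * w)%C| <= normc z * normc w.
Proof.
rewrite -ler_sqr ?nnegrE ?mulr_ge0 ?normc_ge0 //.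
rewrite real_normK ?num_real // exprMn !normc_sqr.
case: z => a b; case: w => c d /=.
by have := sqr_ge0 (a * d - b * c); nra.
Qed.

End ComplexModulus.

Theorem proposition5p6 (R : realType) :
  prop56_stmt (fun x : R => `|x|) (fun x : R => x) /\
  prop56_stmt (@Normc.normc R) (@conjc R).
Proof.
split.
  apply: (@prop56_holds R R _ idfun id) => [z|z|z w|z|z w|z w|z|z w] //=.
  - exact: normr_eq0.
  - exact: normrM.
  - by rewrite !real_normK ?num_real //; ring.
  - by rewrite real_normK ?num_real // expr2.
  - by rewrite normrM.
apply: (@prop56_holds R R[i] _ conjc (@complex.Re R)).
- exact: normc_ge0.
- exact: normc_eq0.
- exact: Normc.normcM.
- exact: conjcK.
- by case=> a b; case.
- exact: normc_sqrD.
- exact: Re_conjcM.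
- exact: Re_conjcM_le.
Qed.
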